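(* Let $p\ge1$, $m\in\mathbb{N}$, $a,b>0$, $\beta\in\mathbb{R}^p$, let $\xi_1,\ldots,\xi_r$ be designs on $\mathcal{X}$ and $q_1,\ldots,q_r\in[0,1]$ with $\sum_{i=1}^r q_i=1$, and let $\zeta$ be the population design assigning weight $q_i$ to $\xi_i$, with information matrix $M(\zeta;\beta)=\sum_{i=1}^r q_iM(\xi_i;\beta)$. Let $\xi=\sum_{i=1}^r q_i\xi_i$ (the mixture of the probability measures $\xi_i$) and let $\tilde\zeta$ be the population design assigning weight 1 to $\xi$, so $M(\tilde\zeta;\beta)=M(\xi;\beta)$. Then $M(\tilde\zeta;\beta)\ge M(\zeta;\beta)$ in the Loewner order. Consequently, for every isotonic criterion function $\Phi$ (i.e. $\Phi(M_1)\ge\Phi(M_2)$ whenever $M_1\ge M_2$ are positive semidefinite), $\Phi(M(\tilde\zeta;\beta))\ge\Phi(M(\zeta;\beta))$.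
   Context: Let $\mathcal{X}\subseteq\mathbb{R}^k$ be a design region and $f=(1,f_1,\ldots,f_{p-1})^T:\mathcal{X}\to\mathbb{R}^p$ a vector of regression functions whose first component is the constant 1. A design $\xi$ is a probability measure on $\mathcal{X}$ with finite support $x_1,\ldots,x_l$ and weights $w_1,\ldots,w_l\ge0$, $\sum_j w_j=1$. The Poisson information matrix is $M_{Po}(\xi;\beta)=\sum_{j=1}^l w_j\exp(f(x_j)^T\beta)f(x_j)f(x_j)^T$, and the Poisson–Gamma information matrix is $M(\xi;\beta)=\frac{a}{b}\Bigl(M_{Po}(\xi;\beta)-\frac{M_{Po}(\xi;\beta)e_1e_1^TM_{Po}(\xi;\beta)}{e_1^TM_{Po}(\xi;\beta)e_1+b/m}\Bigr)$, where $e_1$ is the first standard unit vector of $\mathbb{R}^p$. The Loewner order is $M_1\ge M_2$ iff $M_1-M_2$ is positive semidefinite. *)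

From HB Require Import structures.
From mathcomp Require Import all_boot all_order all_algebra.
From mathcomp Require Import reals sequences exp.
Set Implicit Arguments. Unset Strict Implicit. Unset Printing Implicit Defensive.
Import Order.TTheory GRing.Theory Num.Theory.
Local Open Scope ring_scope.

Definition design (R : realType) (k : nat) := seq ('rV[R]_k * R).

Definition is_design (R : realType) (k : nat) (X : pred 'rV[R]_k)
  (xi : design R k) : Prop :=
  (forall xw, xw \in xi -> xw.1 \in X /\ 0 <= xw.2) /\
  \sum_(xw <- xi) xw.2 = 1.

Definition e1 (R : realType) (p' : nat) : 'cV[R]_p'.+1 :=
  \col_i (i == ord0)%:R.

Definition M_Po (R : realType) (k p' : nat) (f : 'rV[R]_k -> 'cV[R]_p'.+1)
  (xi : design R k) (beta : 'cV[R]_p'.+1) : 'M[R]_p'.+1 :=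
  \sum_(xw <- xi)
     (xw.2 * expR (((f xw.1)^T *m beta) ord0 ord0)) *: (f xw.1 *m (f xw.1)^T).

Definition M_PG (R : realType) (k p' : nat) (f : 'rV[R]_k -> 'cV[R]_p'.+1)
  (a b : R) (m : nat) (xi : design R k) (beta : 'cV[R]_p'.+1) : 'M[R]_p'.+1 :=
  let MP := M_Po f xi beta in
  (a / b) *: (MP - ((((e1 R p')^T *m MP *m e1 R p') ord0 ord0 + b / m%:R)^-1)
                    *: (MP *m e1 R p' *m (e1 R p')^T *m MP)).

Definition mixture (R : realType) (k r : nat) (q : 'I_r -> R)
  (xis : 'I_r -> design R k) : design R k :=
  flatten [seq [seq (xw.1, q i * xw.2) | xw <- xis i] | i <- enum 'I_r].

Definition M_pop (R : realType) (k p' r : nat) (f : 'rV[R]_k -> 'cV[R]_p'.+1)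
  (a b : R) (m : nat) (q : 'I_r -> R) (xis : 'I_r -> design R k)
  (beta : 'cV[R]_p'.+1) : 'M[R]_p'.+1 :=
  \sum_(i < r) q i *: M_PG f a b m (xis i) beta.

Definition psd (R : realType) (n : nat) (A : 'M[R]_n) : Prop :=
  A^T = A /\ forall v : 'cV[R]_n, 0 <= (v^T *m A *m v) ord0 ord0.

Definition loewner_ge (R : realType) (n : nat) (A B : 'M[R]_n) : Prop :=
  psd (A - B).

Definition isotonic (R : realType) (n : nat) (Phi : 'M[R]_n -> R) : Prop :=
  forall M1 M2 : 'M[R]_n, psd M1 -> psd M2 -> loewner_ge M1 M2 -> Phi M2 <= Phi M1.

From HB Require Import structures.
From mathcomp Require Import all_boot all_order all_algebra.
From mathcomp Require Import reals sequences exp.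
From mathcomp Require Import ring lra.
Set Implicit Arguments. Unset Strict Implicit. Unset Printing Implicit Defensive.
Import Order.TTheory GRing.Theory Num.Theory.
Local Open Scope ring_scope.

(* Up to the factor a/b, the Poisson-Gamma information is the rank-one
   downdate G(M) = M - (M e e^T M) / (e^T M e + c) of the Poisson information
   M, with c = b/m > 0.  Its quadratic form is a minimum of functions affine
   in M,
     v^T G(M) v = min_t ((v - t e)^T M (v - t e) + c t^2),
   so G is concave in the Loewner order.  The Poisson information is linear
   in the design, hence the information of the mixture, G applied to the
   average of the M_Po(xi_i), dominates the average of the G(M_Po(xi_i)). *)

Section RankOneDowndate.
Variables (R : realType) (n : nat).
Implicit Types (M N : 'M[R]_n) (u v w e : 'cV[R]_n) (c t : R).

Lemma mul_mx11 (x y : 'M[R]_1) : (x *m y) 0 0 = x 0 0 * y 0 0.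
Proof. by rewrite mxE big_ord1. Qed.

Definition bf v w M : R := (v^T *m M *m w) 0 0.

Lemma bfDm v w M N : bf v w (M + N) = bf v w M + bf v w N.
Proof. by rewrite /bf mulmxDr mulmxDl mxE. Qed.

Lemma bfBm v w M N : bf v w (M - N) = bf v w M - bf v w N.
Proof. by rewrite /bf mulmxBr mulmxBl !mxE. Qed.

Lemma bfZm v w t M : bf v w (t *: M) = t * bf v w M.
Proof. by rewrite /bf -scalemxAr -scalemxAl mxE. Qed.

Lemma bf_sumZm (I : finType) v w (q : I -> R) (F : I -> 'M[R]_n) :
  bf v w (\sum_i q i *: F i) = \sum_i q i * bf v w (F i).
Proof.
rewrite /bf mulmx_sumr mulmx_suml summxE.
by apply: eq_bigr => i _; exact: bfZm.
Qed.

Lemma bfBl u v w M : bf (u - v) w M = bf u w M - bf v w M.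
Proof. by rewrite /bf linearB /= !mulmxBl !mxE. Qed.

Lemma bfZl t v w M : bf (t *: v) w M = t * bf v w M.
Proof. by rewrite /bf linearZ /= -!scalemxAl mxE. Qed.

Lemma bfBr v u w M : bf v (u - w) M = bf v u M - bf v w M.
Proof. by rewrite /bf mulmxBr !mxE. Qed.

Lemma bfZr t v w M : bf v (t *: w) M = t * bf v w M.
Proof. by rewrite /bf -scalemxAr mxE. Qed.

Lemma bf_sym v w M : M^T = M -> bf v w M = bf w v M.
Proof.
move=> symM; rewrite /bf.
have -> : (v^T *m M *m w) 0 0 = (v^T *m M *m w)^T 0 0 by rewrite [RHS]mxE.
by rewrite !trmx_mul trmxK symM mulmxA.
Qed.

Lemma bf_outer v w e M : bf v w (M *m e *m e^T *m M) = bf v e M * bf e w M.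
Proof. by rewrite /bf -mul_mx11 !mulmxA. Qed.

Lemma bf_quadratic v e t M : M^T = M ->
  bf (v - t *: e) (v - t *: e) M = bf v v M - 2 * t * bf v e M + t ^+ 2 * bf e e M.
Proof.
move=> symM; rewrite !bfBl !bfBr !bfZl !bfZr (bf_sym e v symM); ring.
Qed.

Lemma psd0 : psd (0 : 'M[R]_n).
Proof. by split=> [|v]; rewrite ?trmx0 // mulmx0 mul0mx mxE. Qed.

Lemma psdD M N : psd M -> psd N -> psd (M + N).
Proof.
move=> [symM posM] [symN posN]; split; first by rewrite linearD /= symM symN.
by move=> v; rewrite -/(bf _ _ _) bfDm addr_ge0 ?posM ?posN.
Qed.

Lemma psdZ t M : 0 <= t -> psd M -> psd (t *: M).
Proof.
move=> t_ge0 [symM posM]; split; first by rewrite linearZ /= symM.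
by move=> v; rewrite -/(bf _ _ _) bfZm mulr_ge0 ?posM.
Qed.

Lemma psd_sum (I : Type) (s : seq I) (P : pred I) (F : I -> 'M[R]_n) :
  (forall i, P i -> psd (F i)) -> psd (\sum_(i <- s | P i) F i).
Proof. by move=> psdF; elim/big_ind: _ => //; [exact: psd0 | exact: psdD]. Qed.

Lemma psd_outer u : psd (u *m u^T).
Proof.
split=> [|v]; first by rewrite trmx_mul trmxK.
have -> : v^T *m (u *m u^T) *m v = (v^T *m u) *m (v^T *m u)^T.
  by rewrite trmx_mul trmxK !mulmxA.
by rewrite mul_mx11 [X in _ * X]mxE -expr2 sqr_ge0.
Qed.

Definition downdate c e M := M - (bf e e M + c)^-1 *: (M *m e *m e^T *m M).

Lemma downdate_sym c e M : M^T = M -> (downdate c e M)^T = downdate c e M.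
Proof. by move=> symM; rewrite linearB linearZ /= !trmx_mul trmxK symM !mulmxA. Qed.

Lemma bf_downdate c e v M : M^T = M ->
  bf v v (downdate c e M) = bf v v M - bf v e M ^+ 2 / (bf e e M + c).
Proof.
by move=> symM; rewrite bfBm bfZm bf_outer (bf_sym e v symM) expr2 mulrC.
Qed.

Section Variational.
Variables (c : R) (e v : 'cV[R]_n) (M : 'M[R]_n).
Hypotheses (symM : M^T = M) (denom_gt0 : 0 < bf e e M + c).

Let minimizer := bf v e M / (bf e e M + c).

(* The gap is (t d - v^T M e)^2 / d with d = e^T M e + c. *)
Lemma bf_downdate_le t :
  bf v v (downdate c e M) <= bf (v - t *: e) (v - t *: e) M + t ^+ 2 * c.
Proof.
rewrite bf_downdate // bf_quadratic // -subr_ge0.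
set d := bf e e M + c; set B := bf v e M.
have -> : bf v v M - 2 * t * B + t ^+ 2 * bf e e M + t ^+ 2 * c - (bf v v M - B ^+ 2 / d)
    = (t * d - B) ^+ 2 / d by rewrite /d; field; exact: lt0r_neq0.
by rewrite divr_ge0 ?sqr_ge0 ?ltW.
Qed.

Lemma bf_downdate_min :
  bf v v (downdate c e M)
  = bf (v - minimizer *: e) (v - minimizer *: e) M + minimizer ^+ 2 * c.
Proof.
by rewrite bf_downdate // bf_quadratic // /minimizer; field; exact: lt0r_neq0.
Qed.

End Variational.

Lemma psd_downdate c e M : 0 < c -> psd M -> psd (downdate c e M).
Proof.
move=> c_gt0 [symM posM]; split; first exact: downdate_sym.
have denom_gt0 : 0 < bf e e M + c by have := posM e; rewrite -/(bf _ _ _); lra.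
move=> v; rewrite -/(bf _ _ _) bf_downdate_min //.
by rewrite addr_ge0 ?posM // mulr_ge0 ?sqr_ge0 ?ltW.
Qed.

Lemma downdate_concave (I : finType) c e (Ms : I -> 'M[R]_n) (q : I -> R) :
  0 < c -> (forall i, psd (Ms i)) -> (forall i, 0 <= q i) -> \sum_i q i = 1 ->
  loewner_ge (downdate c e (\sum_i q i *: Ms i)) (\sum_i q i *: downdate c e (Ms i)).
Proof.
move=> c_gt0 psdMs q_ge0 q_sum1.
have symMs i : (Ms i)^T = Ms i by case: (psdMs i).
have [symMbar posMbar] : psd (\sum_i q i *: Ms i).
  by apply: psd_sum => i _; apply: psdZ.
have denom_gt0 : 0 < bf e e (\sum_i q i *: Ms i) + c.
  by have := posMbar e; rewrite -/(bf _ _ _); lra.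
split.
  rewrite linearB linear_sum /= downdate_sym //; congr (_ - _).
  by apply: eq_bigr => i _; rewrite linearZ /= downdate_sym.
move=> v; rewrite -/(bf _ _ _) bfBm subr_ge0 bf_downdate_min // bf_sumZm.
set t := _ / _; set w := v - t *: e.
have -> : bf w w (\sum_i q i *: Ms i) + t ^+ 2 * c
    = \sum_i q i * (bf w w (Ms i) + t ^+ 2 * c).
  rewrite bf_sumZm -[X in _ + X]mul1r -q_sum1 mulr_suml -big_split /=.
  by apply: eq_bigr => i _; rewrite mulrDr.
apply: ler_sum => i _; rewrite ler_wpM2l // bf_downdate_le //.
by case: (psdMs i) => _ /(_ e); rewrite -/(bf _ _ _); lra.
Qed.

End RankOneDowndate.

Lemma M_PG_downdate (R : realType) (k p' : nat) (f : 'rV[R]_k -> 'cV[R]_p'.+1)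
  (a b : R) (m : nat) (xi : design R k) (beta : 'cV[R]_p'.+1) :
  M_PG f a b m xi beta = (a / b) *: downdate (b / m%:R) (e1 R p') (M_Po f xi beta).
Proof. by []. Qed.

Lemma M_Po_mixture (R : realType) (k p' r : nat) (f : 'rV[R]_k -> 'cV[R]_p'.+1)
  (q : 'I_r -> R) (xis : 'I_r -> design R k) (beta : 'cV[R]_p'.+1) :
  M_Po f (mixture q xis) beta = \sum_i q i *: M_Po f (xis i) beta.
Proof.
rewrite /M_Po /mixture big_flatten /= big_map big_enum /=.
apply: eq_bigr => i _; rewrite big_map scaler_sumr.
by apply: eq_bigr => xw _ /=; rewrite scalerA mulrA.
Qed.

Lemma psd_M_Po (R : realType) (k p' : nat) (X : pred 'rV[R]_k)
  (f : 'rV[R]_k -> 'cV[R]_p'.+1) (xi : design R k) (beta : 'cV[R]_p'.+1) :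
  is_design X xi -> psd (M_Po f xi beta).
Proof.
move=> [w_ge0 _]; rewrite /M_Po big_seq; apply: psd_sum => xw xw_in.
apply: psdZ; last exact: psd_outer.
by rewrite mulr_ge0 ?expR_ge0 ?(proj2 (w_ge0 xw xw_in)).
Qed.

Theorem corollary1 (R : realType) (k p' : nat) (X : pred 'rV[R]_k)
  (f : 'rV[R]_k -> 'cV[R]_p'.+1)
  (hf1 : forall x, x \in X -> f x ord0 ord0 = 1)
  (m : nat) (hm : (0 < m)%N) (a b : R) (ha : 0 < a) (hb : 0 < b)
  (beta : 'cV[R]_p'.+1) (r : nat)
  (xis : 'I_r -> design R k) (hxis : forall i, is_design X (xis i))
  (q : 'I_r -> R) (hq : forall i, 0 <= q i <= 1) (hqs : \sum_(i < r) q i = 1) :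
  loewner_ge (M_PG f a b m (mixture q xis) beta) (M_pop f a b m q xis beta) /\
  (forall Phi : 'M[R]_p'.+1 -> R, isotonic Phi ->
     Phi (M_pop f a b m q xis beta) <= Phi (M_PG f a b m (mixture q xis) beta)).
Proof.
have c_gt0 : 0 < b / m%:R by rewrite divr_gt0 // ltr0n.
have ab_ge0 : 0 <= a / b by rewrite ltW // divr_gt0.
have q_ge0 i : 0 <= q i by case/andP: (hq i).
have psdPo i : psd (M_Po f (xis i) beta) by exact: psd_M_Po (hxis i).
set G := downdate (b / m%:R) (e1 R p').
have mix_eq : M_PG f a b m (mixture q xis) beta
    = (a / b) *: G (\sum_i q i *: M_Po f (xis i) beta).
  by rewrite M_PG_downdate M_Po_mixture.
have pop_eq : M_pop f a b m q xis beta
    = (a / b) *: \sum_i q i *: G (M_Po f (xis i) beta).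
  rewrite scaler_sumr; apply: eq_bigr => i _.
  by rewrite M_PG_downdate !scalerA mulrC.
have ge_pop : loewner_ge (M_PG f a b m (mixture q xis) beta) (M_pop f a b m q xis beta).
  rewrite /loewner_ge mix_eq pop_eq -scalerBr; apply: psdZ => //.
  exact: downdate_concave.
split=> // Phi isoPhi; apply: isoPhi => //.
  rewrite mix_eq; apply: psdZ => //; apply: psd_downdate => //.
  by apply: psd_sum => i _; exact: psdZ.
rewrite pop_eq; apply: psdZ => //; apply: psd_sum => i _.
by apply: psdZ => //; exact: psd_downdate.
Qed.
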